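(* Let $P$ be a valid path with $m=m_T^P$ toll arcs $\tau_1,\dots,\tau_m$ and let $T$ be a nonnegative toll vector. Then $T$ is consistent with $P$ if and only if $$\mathcal{L}_{i,j}+\mathcal{T}_{i,j}\le \mathcal{U}_{i,j}\qquad\text{for all }0\le i<j\le m+1.$$
   Context: Setting: $G=(V,A)$ is a directed multigraph with $A=A_T\cup A_U$ partitioned into toll arcs $A_T$ and toll-free arcs $A_U$, fixed costs $c:A_T\to\mathbf{N}$, $d:A_U\to\mathbf{N}$, and vertices $s,t$ such that there is an $s$–$t$ path using only toll-free arcs. A toll vector $T$ assigns a toll $T(e)\ge 0$ to each toll arc; under $T$ a toll arc $e$ costs $c(e)+T(e)$ and a toll-free arc $e$ costs $d(e)$, and the length of a path is the sum of the costs of its arcs. For an $s$–$t$ path $P$, $\mathcal{N}_T(P)$ denotes the network obtained by deleting all toll arcs not on $P$, with the costs induced by $T$. A path $P$ from $s$ to $t$ is valid if it contains $m_T^P\ge 1$ toll arcs and $P$ is a shortest $s$–$t$ path in $\mathcal{N}_0(P)$ (all tolls zero). Write a valid path as $P=(\upsilon_{0,1},\tau_1,\upsilon_{1,2},\tau_2,\dots,\tau_m,\upsilon_{m,m+1})$, where $m=m_T^P$, $\tau_i$ is the $i$-th toll arc in order of traversal and $\upsilon_{i,i+1}$ is the subpath (of toll-free arcs) between consecutive toll arcs; set $\mathrm{TERM}(\tau_0)=s$ and $\mathrm{INIT}(\tau_{m+1})=t$, where $\mathrm{INIT},\mathrm{TERM}$ denote initial and terminal vertices of an arc. For $0\le i<j\le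 m+1$, $\mathcal{U}_{i,j}$ is the length of a shortest path from $\mathrm{TERM}(\tau_i)$ to $\mathrm{INIT}(\tau_j)$ using only toll-free arcs ($+\infty$ if none). For $0\le k<l\le m+1$, $\mathcal{L}_{k,l}=\sum_{i=k}^{l-1}\mathcal{U}_{i,i+1}+\sum_{i=k+1}^{l-1}c(\tau_i)$ and $\mathcal{T}_{k,l}=\sum_{i=k+1}^{l-1}T(\tau_i)$ (empty sums are $0$). A toll vector $T$ is consistent with a valid path $P$ if $P$ is a shortest $s$–$t$ path in $\mathcal{N}_T(P)$. *)

From HB Require Import structures.
From mathcomp Require Import all_boot all_order all_algebra.
From mathcomp Require Import boolp classical_sets reals constructive_ereal ereal.
Set Implicit Arguments. Unset Strict Implicit. Unset Printing Implicit Defensive.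
Import Order.TTheory GRing.Theory Num.Theory.
Local Open Scope ring_scope.

Section TollNetwork.
(* Arcs with [istoll e] are the toll arcs A_T,
   the others the toll-free arcs A_U.  Cost c e is used for toll arcs,
   d e for toll-free arcs. *)
Variables (R : realType) (V A : finType) (INIT TERM : A -> V)
  (istoll : pred A) (c d : A -> nat) (s t : V).

Fixpoint is_walk (u v : V) (p : seq A) : bool :=
  match p with
  | [::] => u == v
  | e :: p' => (INIT e == u) && is_walk (TERM e) v p'
  end.

Definition is_path (u v : V) (p : seq A) : bool :=
  is_walk u v p && uniq (u :: map TERM p).

Definition tf_path (u v : V) (p : seq A) : bool :=
  is_path u v p && all (predC istoll) p.

Definition arc_cost (T : A -> R) (e : A) : R :=
  if istoll e then (c e)%:R + T e else (d e)%:R.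

Definition plen (T : A -> R) (p : seq A) : R := \sum_(e <- p) arc_cost T e.

Definition tflen (p : seq A) : nat := \sum_(e <- p) d e.

(* arcs of the network N_T(P): toll-free arcs and toll arcs lying on P *)
Definition in_net (P : seq A) (e : A) : bool := ~~ istoll e || (e \in P).

Definition shortest_in_net (T : A -> R) (P : seq A) : Prop :=
  [/\ is_path s t P, all (in_net P) P &
      forall Q, is_path s t Q -> all (in_net P) Q -> plen T P <= plen T Q].

Definition zero_toll : A -> R := fun _ => 0.

Definition valid (P : seq A) : Prop :=
  (1 <= count istoll P)%N /\ shortest_in_net zero_toll P.

Definition consistent (T : A -> R) (P : seq A) : Prop := shortest_in_net T P.

(* toll arcs of P in order of traversal: tau_1 .. tau_m = (tolls P)`_0 .. `_(m-1) *)
Definition tolls (P : seq A) : seq A := seq.filter istoll P.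

(* TERM(tau_i) for 0 <= i <= m, with TERM(tau_0) = s *)
Definition termv (P : seq A) (i : nat) : V :=
  if i is k.+1 then nth s (map TERM (tolls P)) k else s.

(* INIT(tau_j) for 1 <= j <= m+1, with INIT(tau_(m+1)) = t *)
Definition initv (P : seq A) (j : nat) : V :=
  nth t (map INIT (tolls P)) j.-1.

(* shortest toll-free distance from u to v (+oo if no toll-free path) *)
Definition tf_dist (u v : V) : \bar R :=
  ereal_inf [set ((tflen q)%:R)%:E | q in [set q | tf_path u v q]].

Definition Ucal (P : seq A) (i j : nat) : \bar R := tf_dist (termv P i) (initv P j).

(* c(tau_i), T(tau_i) for 1 <= i <= m *)
Definition ctau (P : seq A) (i : nat) : nat := nth 0%N (map c (tolls P)) i.-1.
Definition Ttau (T : A -> R) (P : seq A) (i : nat) : R := nth 0 (map T (tolls P)) i.-1.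

Definition Lcal (P : seq A) (k l : nat) : \bar R :=
  ((\sum_(k <= i < l) Ucal P i i.+1) + \sum_(k.+1 <= i < l) ((ctau P i)%:R)%:E)%E.

Definition Tcal (T : A -> R) (P : seq A) (k l : nat) : R :=
  \sum_(k.+1 <= i < l) Ttau T P i.

End TollNetwork.

From HB Require Import structures.
From mathcomp Require Import all_boot all_order all_algebra.
From mathcomp Require Import boolp classical_sets reals constructive_ereal ereal.
From mathcomp Require Import lra.
Import Order.TTheory GRing.Theory Num.Theory.
Set Implicit Arguments. Unset Strict Implicit. Unset Printing Implicit Defensive.
Local Open Scope ring_scope.

(* Let alpha_i be the length under T of the prefix of P ending with tau_i, and beta_j
   that of the prefix ending at INIT tau_j.  Since P is shortest in N_0(P), its toll-free
   piece between tau_k and tau_(k+1) realises U_(k,k+1), so L_(i,j) + T_(i,j) telescopes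
   to beta_j - alpha_i.  If T is consistent, replacing the part of P between TERM tau_i
   and INIT tau_j by a toll-free path and cutting out cycles yields an s-t path of
   N_T(P), hence beta_j - alpha_i <= U_(i,j).  Conversely, follow an s-t path of N_T(P)
   from toll arc to toll arc: a toll-free stretch from TERM tau_i to INIT tau_j costs at
   least beta_j - alpha_i when i < j, and alpha only grows along P when j <= i, so the
   path is no shorter than P. *)

Section Walks.
Variables (V A : finType) (INIT TERM : A -> V).
Local Notation walk := (is_walk INIT TERM).
Local Notation path := (is_path INIT TERM).
Local Notation wend u p := (last u (map TERM p)).

Lemma is_walk_last u v p : walk u v p -> v = wend u p.
Proof. by elim: p u => [|e p IH] u /=; [move/eqP | case/andP => _ /IH]. Qed.

Lemma is_walk_cat u v p1 p2 :
  walk u v (p1 ++ p2) = walk u (wend u p1) p1 && walk (wend u p1) v p2.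
Proof. by elim: p1 u => [|e p IH] u /=; [rewrite eqxx | rewrite IH andbA]. Qed.

Lemma is_path_split u v p1 p2 : path u v (p1 ++ p2) ->
  path u (wend u p1) p1 /\ path (wend u p1) v p2.
Proof.
rewrite /is_path is_walk_cat map_cat -cat_cons cat_uniq.
case/andP => /andP[w1 w2] /and3P[u1 dis u2]; split; rewrite ?w1 ?w2 ?u1 //=.
rewrite u2 andbT; apply/negP => H; move/hasPn: dis => /(_ _ H).
by rewrite mem_last.
Qed.

Lemma is_path_drop e0 u v p k : path u v p -> (k < size p)%N ->
  path (TERM (nth e0 p k)) v (drop k.+1 p).
Proof.
move=> hp hk; rewrite -(cat_take_drop k.+1 p) in hp.
have [_] := is_path_split hp.
by rewrite (take_nth e0 hk) map_rcons last_rcons.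
Qed.

Lemma is_walk_shorten u v W : walk u v W -> exists2 Q, path u v Q & subseq Q W.
Proof.
elim: W u => [|e W IH] u.
  by move/eqP => <-; exists [::]; rewrite /is_path /= eqxx.
case/andP => /eqP Hi /IH [Q pQ sQ].
have [uQ | uQ] := boolP (u \in map TERM (e :: Q)); last first.
  exists (e :: Q); last by rewrite /= eqxx.
  by move: pQ; rewrite /is_path /= Hi eqxx /= => /andP[-> ->]; rewrite andbT.
set k := index u (map TERM (e :: Q)).
have hk : (k < size (e :: Q))%N by rewrite -(size_map TERM) index_mem.
have hTk : TERM (nth e (e :: Q) k) = u by rewrite -(nth_map e u) // nth_index.
exists (drop k.+1 (e :: Q)).
  move: hk hTk; case: k => [|k] /= hk <-; first by rewrite drop0.
  exact: is_path_drop pQ hk.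
apply: (@subseq_trans _ (e :: Q)); first exact: drop_subseq.
by rewrite /= eqxx.
Qed.

End Walks.

Lemma sum_subseq_le (I : eqType) (R : numDomainType) (f : I -> R) Q W :
  (forall e, 0 <= f e) -> subseq Q W -> \sum_(e <- Q) f e <= \sum_(e <- W) f e.
Proof.
move=> f0; elim: W Q => [|x W IH] Q; first by rewrite subseq0 => /eqP ->.
case: Q => [_|y Q /=]; first by rewrite big_nil; apply: sumr_ge0.
case: eqP => [<-|_] sQ; first by rewrite !big_cons lerD2l; exact: IH.
by rewrite [X in _ <= X]big_cons; apply: ler_wpDl => //; exact: IH.
Qed.

Lemma sum_telescope_pieces (Z : zmodType) (a b g : nat -> Z) i j : (i < j)%N ->
  (forall p, (i < p < j)%N -> a p = b p + g p) ->
  \sum_(i <= p < j) (b p.+1 - a p) + \sum_(i.+1 <= p < j) g p = b j - a i.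
Proof.
elim: j => // j IH; rewrite ltnS leq_eqVlt => /orP[/eqP <- | hij] h.
  by rewrite big_nat1 big_geq // addr0.
rewrite big_nat_recr ?(ltnW hij) //= big_nat_recr //= addrACA.
rewrite IH => [|//|p /andP[hip hpj]]; last by apply: h; rewrite hip ltnW.
have -> : b j.+1 - a j + g j = b j.+1 - b j.
  by rewrite (h j) ?hij ?ltnSn // opprD addrA addrNK.
by rewrite addrC subrKA.
Qed.

Section TollPositions.
Variables (V A : finType) (INIT TERM : A -> V) (istoll : pred A) (s t : V).
Variables (a0 : A) (P : seq A).
Hypothesis P_path : is_path INIT TERM s t P.

Local Notation tl := (tolls istoll P).
Local Notation m := (size tl).
Local Notation wend u p := (last u (map TERM p)).

Definition toll_index k := index (nth a0 tl k) P.

(* [take (term_pos i) P] is the prefix of P ending with tau_i (empty for i = 0)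
   and [take (init_pos j) P] the prefix ending at INIT tau_j (all of P for j = m+1). *)
Definition term_pos i := if i is k.+1 then (toll_index k).+1 else 0%N.
Definition init_pos j := if (j <= m)%N then toll_index j.-1 else size P.

Local Notation segment i j := (drop (term_pos i) (take (init_pos j) P)).

Definition tolls_before n := count istoll (take n P).

Lemma P_uniq : uniq P.
Proof. by case/andP: P_path => _ /= /andP[_ /map_uniq]. Qed.

Lemma toll_indexP k : (k < m)%N ->
  [/\ (toll_index k < size P)%N, nth a0 P (toll_index k) = nth a0 tl k
    & istoll (nth a0 tl k)].
Proof.
move=> hk; have : nth a0 tl k \in tl by exact: mem_nth.
by rewrite mem_filter => /andP[ht hP]; split; rewrite ?index_mem ?nth_index.
Qed.

Lemma tolls_before_drop a b : (a <= b)%N ->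
  tolls_before b = (tolls_before a + count istoll (drop a (take b P)))%N.
Proof.
move=> hab; rewrite /tolls_before -{1}(cat_take_drop a (take b P)).
by rewrite take_takel // count_cat.
Qed.

Lemma tolls_before_mono a b : (a <= b)%N -> (tolls_before a <= tolls_before b)%N.
Proof. by move=> hab; rewrite (tolls_before_drop hab) leq_addr. Qed.

Lemma lt_of_tolls_before_lt a b : (tolls_before a < tolls_before b)%N -> (a < b)%N.
Proof. by apply: contraTT; rewrite -!leqNgt; apply: tolls_before_mono. Qed.

Lemma tolls_before_size : tolls_before (size P) = m.
Proof. by rewrite /tolls_before take_size /tolls size_filter. Qed.

(* The arcs of tl are distinct, so exactly k of them precede the k-th one on P. *)
Lemma tolls_before_toll_index k : (k < m)%N ->
  tolls_before (toll_index k) = k /\ tolls_before (toll_index k).+1 = k.+1.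
Proof.
move=> hk; have [hq he ht] := toll_indexP hk.
set n := toll_index k in hq he *.
have tl_split :
    tl = seq.filter istoll (take n P) ++ nth a0 tl k :: seq.filter istoll (drop n.+1 P).
  by rewrite {1}/tolls -{1}(cat_take_drop n P) filter_cat (drop_nth a0 hq) he /= ht.
have lt_m : (tolls_before n < m)%N.
  rewrite [in X in (_ < X)%N]tl_split size_cat /= /tolls_before size_filter.
  by rewrite addnS ltnS leq_addr.
have : nth a0 tl (tolls_before n) = nth a0 tl k.
  by rewrite [in X in nth _ X _ = _]tl_split /tolls_before -size_filter nth_cat ltnn subnn.
move/eqP; rewrite nth_uniq ?filter_uniq ?P_uniq // => /eqP hn; split => //.
rewrite /tolls_before (take_nth a0 hq) -cats1 count_cat /= he ht.
by rewrite -/(tolls_before n) hn addn1.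
Qed.

Lemma tolls_before_term_pos i : (i <= m)%N -> tolls_before (term_pos i) = i.
Proof.
case: i => [|i] hi /=; first by rewrite /tolls_before take0.
by case: (tolls_before_toll_index hi).
Qed.

Lemma tolls_before_init_pos j : (0 < j <= m.+1)%N -> tolls_before (init_pos j) = j.-1.
Proof.
case/andP=> hj0 hj; rewrite /init_pos; case: ifP => hjm.
  by case: (tolls_before_toll_index (k := j.-1) _) => //; rewrite prednK.
have -> : j = m.+1 by apply/eqP; rewrite eqn_leq hj ltnNge hjm.
exact: tolls_before_size.
Qed.

Lemma init_pos_le_size j : (init_pos j <= size P)%N.
Proof. by rewrite /init_pos; case: ifP => // _; exact: index_size. Qed.

Lemma term_pos_le_size i : (i <= m)%N -> (term_pos i <= size P)%N.
Proof. by case: i => [|i] hi //=; case: (toll_indexP hi). Qed.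

Lemma term_pos_mono b a : (b <= a <= m)%N -> (term_pos b <= term_pos a)%N.
Proof.
case/andP=> hba ham; case: b hba => [|b] hba //=.
apply: lt_of_tolls_before_lt; rewrite tolls_before_term_pos //.
by case: (tolls_before_toll_index (leq_trans hba ham)) => ->.
Qed.

Lemma term_pos_le_init_pos i j : (i < j <= m.+1)%N -> (term_pos i <= init_pos j)%N.
Proof.
case: j => [|j] /andP[hij hj] //; rewrite /init_pos; case: ifP => [hjm | _]; last first.
  by apply: term_pos_le_size; rewrite -ltnS (leq_trans hij hj).
case: i hij => [|i] //=; rewrite ltnS => hij; apply: lt_of_tolls_before_lt.
have [-> _] := tolls_before_toll_index hjm.
by have [-> _] := tolls_before_toll_index (ltn_trans hij hjm).
Qed.

Lemma segment_toll_free k : (k <= m)%N -> all (predC istoll) (segment k k.+1).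
Proof.
move=> hk; have hkk : (k < k.+1 <= m.+1)%N by rewrite ltnSn ltnS.
have := tolls_before_drop (term_pos_le_init_pos hkk).
rewrite tolls_before_term_pos // tolls_before_init_pos ?ltnS //=.
move/eqP; rewrite -[X in X == _]addn0 eqn_add2l eq_sym => /eqP no_toll.
by rewrite all_predC has_count no_toll.
Qed.

Local Notation termv := (termv TERM istoll s P).
Local Notation initv := (initv INIT istoll t P).

Lemma termv_toll k : (k < m)%N -> termv k.+1 = TERM (nth a0 tl k).
Proof. by move=> hk; rewrite /= (nth_map a0). Qed.

Lemma initv_toll k : (k < m)%N -> initv k.+1 = INIT (nth a0 tl k).
Proof. by move=> hk; rewrite /initv (nth_map a0). Qed.

Lemma initv_end : initv m.+1 = t.
Proof. by rewrite /initv /= nth_default // size_map. Qed.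

Lemma last_term_pos i : (i <= m)%N -> wend s (take (term_pos i) P) = termv i.
Proof.
case: i => [|i] hi /=; first by rewrite take0.
have [hq he _] := toll_indexP hi.
by rewrite (take_nth a0 hq) map_rcons last_rcons he -termv_toll.
Qed.

Lemma last_init_pos j : (0 < j <= m.+1)%N -> wend s (take (init_pos j) P) = initv j.
Proof.
case/andP: P_path => walkP _; case: j => [|j] // /andP[_ hj].
rewrite /init_pos; case: ifP => [hjm | hjm]; last first.
  have -> : j = m by apply/eqP; rewrite eqn_leq -ltnS hj leqNgt hjm.
  by rewrite initv_end take_size -(is_walk_last walkP).
have [hq he _] := toll_indexP hjm.
move: walkP; rewrite -{1}(cat_take_drop (toll_index j) P) is_walk_cat (drop_nth a0 hq).
by case/and3P => _ /eqP <- _; rewrite initv_toll // he.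
Qed.

Lemma is_walk_splice i j q : (i < j <= m.+1)%N ->
  is_walk INIT TERM (termv i) (initv j) q ->
  is_walk INIT TERM s t (take (term_pos i) P ++ q ++ drop (init_pos j) P).
Proof.
case/andP=> hij hj walkq; case/andP: P_path => walkP _.
have hi : (i <= m)%N by rewrite -ltnS (leq_trans hij hj).
have hj0 : (0 < j <= m.+1)%N by rewrite hj andbT (leq_ltn_trans _ hij).
have walk_pre : is_walk INIT TERM s (termv i) (take (term_pos i) P).
  move: walkP; rewrite -{1}(cat_take_drop (term_pos i) P) is_walk_cat.
  by rewrite last_term_pos // => /andP[].
have walk_suf : is_walk INIT TERM (initv j) t (drop (init_pos j) P).
  move: walkP; rewrite -{1}(cat_take_drop (init_pos j) P) is_walk_cat.
  by rewrite last_init_pos // => /andP[].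
by rewrite is_walk_cat last_term_pos // walk_pre is_walk_cat -(is_walk_last walkq) walkq.
Qed.

Lemma is_path_segment a b : (a <= b <= size P)%N ->
  is_path INIT TERM (wend s (take a P)) (wend s (take b P)) (drop a (take b P)).
Proof.
case/andP=> hab hb.
have take_b : take a P ++ drop a (take b P) = take b P.
  by rewrite -{1}(take_takel P hab) cat_take_drop.
have : is_path INIT TERM s t ((take a P ++ drop a (take b P)) ++ drop b P).
  by rewrite take_b cat_take_drop.
by case/is_path_split => /is_path_split[_]; rewrite take_b.
Qed.

End TollPositions.

Section PathLengths.
Variables (R : realType) (A : finType) (istoll : pred A) (c d : A -> nat).
Implicit Types (T : A -> R) (p q : seq A).
Local Notation len T := (plen istoll c d T).

Lemma plen_nil T : len T [::] = 0.
Proof. exact: big_nil. Qed.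

Lemma plen_cons T e p : len T (e :: p) = arc_cost istoll c d T e + len T p.
Proof. exact: big_cons. Qed.

Lemma plen_cat T p q : len T (p ++ q) = len T p + len T q.
Proof. exact: big_cat. Qed.

Lemma plen_take_drop T p a b : (a <= b)%N ->
  len T (take b p) = len T (take a p) + len T (drop a (take b p)).
Proof. by move=> hab; rewrite -{1}(cat_take_drop a (take b p)) take_takel // plen_cat. Qed.

Lemma plen_toll_free T p : all (predC istoll) p -> len T p = (tflen d p)%:R.
Proof.
elim: p => [|e p IH] /=; first by rewrite plen_nil /tflen big_nil.
by case/andP => he hp; rewrite plen_cons IH // /tflen big_cons natrD /arc_cost (negbTE he).
Qed.

Variable T : A -> R.
Hypothesis T_ge0 : forall e, istoll e -> 0 <= T e.

Lemma arc_cost_ge0 e : 0 <= arc_cost istoll c d T e.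
Proof. by rewrite /arc_cost; case: ifP => he //; rewrite addr_ge0 // T_ge0. Qed.

Lemma plen_ge0 p : 0 <= len T p.
Proof. by apply: sumr_ge0 => e _; apply: arc_cost_ge0. Qed.

Lemma plen_subseq_le p q : subseq p q -> len T p <= len T q.
Proof. exact: sum_subseq_le arc_cost_ge0. Qed.

End PathLengths.

Arguments plen_take_drop {R A istoll c d} T p {a b}.
Arguments plen_toll_free {R A istoll c d} T {p}.
Arguments plen_ge0 {R A istoll c d T} T_ge0 p.
Arguments plen_subseq_le {R A istoll c d T} T_ge0 {p q}.
Arguments arc_cost_ge0 {R A istoll c d T} T_ge0 e.

Section Characterization.
Variables (R : realType) (V A : finType) (INIT TERM : A -> V) (istoll : pred A).
Variables (c d : A -> nat) (s t : V) (a0 : A) (P : seq A).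
Hypothesis P_valid : valid R INIT TERM istoll c d s t P.

Let P_path : is_path INIT TERM s t P.
Proof. by case: P_valid => _ []. Qed.

Local Notation tl := (tolls istoll P).
Local Notation m := (size tl).
Local Notation termv := (termv TERM istoll s P).
Local Notation initv := (initv INIT istoll t P).
Local Notation term_pos := (term_pos istoll a0 P).
Local Notation init_pos := (init_pos istoll a0 P).
Local Notation len T := (plen istoll c d T).
Local Notation prefix_len T n := (len T (take n P)).
Local Notation segment i j := (drop (term_pos i) (take (init_pos j) P)).
Local Notation Ucal := (Ucal R INIT TERM istoll d s t P).
Local Notation Lcal := (Lcal R INIT TERM istoll c d s t P).

Lemma term_prefix_len (T : A -> R) k : (k < m)%N ->
  prefix_len T (term_pos k.+1) =
  prefix_len T (init_pos k.+1) + arc_cost istoll c d T (nth a0 tl k).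
Proof.
move=> hk; have [hq he _] := toll_indexP a0 hk.
by rewrite /= /init_pos hk (take_nth a0 hq) -cats1 plen_cat /plen big_seq1 he.
Qed.

Lemma arc_cost_toll (T : A -> R) k : (k < m)%N ->
  arc_cost istoll c d T (nth a0 tl k) = (ctau istoll c P k.+1)%:R + Ttau istoll T P k.+1.
Proof.
move=> hk; have [_ _ ht] := toll_indexP a0 hk.
by rewrite /arc_cost ht /ctau /Ttau /= (nth_map a0) // (nth_map a0).
Qed.

Lemma term_prefix_mono (T : A -> R) b a :
  (forall e, istoll e -> 0 <= T e) -> (b <= a <= m)%N ->
  prefix_len T (term_pos b) <= prefix_len T (term_pos a).
Proof.
move=> T_ge0 hba.
by rewrite (plen_take_drop T P (term_pos_mono a0 P_path hba)) lerDl plen_ge0.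
Qed.

Lemma segment_le_of_shortest (T : A -> R) i j q :
  (forall e, istoll e -> 0 <= T e) -> shortest_in_net INIT TERM istoll c d s t T P ->
  (i < j <= m.+1)%N -> tf_path INIT TERM istoll (termv i) (initv j) q ->
  len T (segment i j) <= (tflen d q)%:R.
Proof.
move=> T_ge0 [_ _ P_min] hij /andP[/andP[walkq _] q_tf].
have [Q pathQ subQ] := is_walk_shorten (is_walk_splice a0 P_path hij walkq).
have netQ : all (in_net istoll P) Q.
  apply/allP => e /(mem_subseq subQ); rewrite !mem_cat /in_net => /or3P[h|h|h].
  - by rewrite (mem_take h) orbT.
  - by move/allP: q_tf => /(_ e h) /= ->.
  - by rewrite (mem_drop h) orbT.
have := le_trans (P_min Q pathQ netQ) (plen_subseq_le T_ge0 subQ).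
rewrite -{1}(cat_take_drop (init_pos j) P) !plen_cat (plen_toll_free T q_tf).
rewrite (plen_take_drop T P (term_pos_le_init_pos a0 P_path hij)).
by move=> h; lra.
Qed.

Lemma Ucal_segment k : (k <= m)%N -> Ucal k k.+1 = ((tflen d (segment k k.+1))%:R)%:E.
Proof.
move=> hk; have hkk : (k < k.+1 <= m.+1)%N by rewrite ltnSn ltnS.
have seg_tf := segment_toll_free a0 P_path hk.
have seg_path : tf_path INIT TERM istoll (termv k) (initv k.+1) (segment k k.+1).
  rewrite /tf_path seg_tf andbT -(last_term_pos _ _ a0) // -(last_init_pos a0 P_path) //.
  apply: (is_path_segment P_path).
  by rewrite (term_pos_le_init_pos a0 P_path hkk) init_pos_le_size.
apply/eqP; rewrite eq_le; apply/andP; split.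
  by apply: ereal_inf_lbound; exists (segment k k.+1).
apply: le_ereal_inf_tmp => _ [q hq <-]; rewrite lee_fin.
rewrite -(plen_toll_free (c := c) (@zero_toll R A) seg_tf).
by apply: segment_le_of_shortest P_valid.2 hkk hq.
Qed.

Lemma Lcal_add_Tcal (T : A -> R) i j : (i < j <= m.+1)%N ->
  (Lcal i j + (Tcal istoll T P i j)%:E)%E =
  (prefix_len T (init_pos j) - prefix_len T (term_pos i))%:E.
Proof.
case/andP=> hij hjm; rewrite /Lcal /Tcal.
rewrite (@eq_big_nat _ _ _ i j _
  (fun k => (prefix_len T (init_pos k.+1) - prefix_len T (term_pos k))%:E)); last first.
  move=> k /andP[_ hkj]; have hkm : (k <= m)%N by rewrite -ltnS (leq_trans hkj hjm).
  have hkk : (k < k.+1 <= m.+1)%N by rewrite ltnSn ltnS.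
  rewrite Ucal_segment // (plen_take_drop T P (term_pos_le_init_pos a0 P_path hkk)).
  by rewrite (plen_toll_free T (segment_toll_free a0 P_path hkm)) addrC addKr.
rewrite !sumEFin -!EFinD -addrA -big_split; congr EFin.
apply: (sum_telescope_pieces (a := fun k => prefix_len T (term_pos k))
  (b := fun k => prefix_len T (init_pos k))) => // -[|k] // /andP[_ hkj].
have hk : (k < m)%N by rewrite -ltnS (leq_trans hkj hjm).
by rewrite term_prefix_len // arc_cost_toll.
Qed.

Section Sufficiency.
Variable T : A -> R.
Hypothesis T_ge0 : forall e, istoll e -> 0 <= T e.
Hypothesis LT_le_U : forall i j, (i < j <= m.+1)%N ->
  (Lcal i j + (Tcal istoll T P i j)%:E <= Ucal i j)%E.

Lemma init_prefix_le i j r : (i < j <= m.+1)%N ->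
  tf_path INIT TERM istoll (termv i) (initv j) r ->
  prefix_len T (init_pos j) <= prefix_len T (term_pos i) + len T r.
Proof.
move=> hij r_tf; have r_inf : (Ucal i j <= ((tflen d r)%:R)%:E)%E.
  by apply: ereal_inf_lbound; exists r.
have := le_trans (LT_le_U hij) r_inf.
rewrite (Lcal_add_Tcal T hij) lee_fin (plen_toll_free T (proj2 (andP r_tf))).
by move=> h; lra.
Qed.

(* For i <= k this is [init_prefix_le]; otherwise tau_(k+1) precedes tau_i on P. *)
Lemma term_prefix_le_toll i k r : (i <= m)%N -> (k < m)%N ->
  tf_path INIT TERM istoll (termv i) (INIT (nth a0 tl k)) r ->
  prefix_len T (term_pos k.+1) <=
  prefix_len T (term_pos i) + len T r + arc_cost istoll c d T (nth a0 tl k).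
Proof.
move=> hi hk r_tf; have [ik | ki] := ltnP i k.+1.
  rewrite term_prefix_len // lerD2r.
  apply: init_prefix_le; last by rewrite (initv_toll _ _ a0).
  by rewrite ik ltnS ltnW.
have mono : prefix_len T (term_pos k.+1) <= prefix_len T (term_pos i).
  by apply: term_prefix_mono; rewrite ?ki.
have r_ge0 : 0 <= len T r := plen_ge0 T_ge0 r.
have e_ge0 : 0 <= arc_cost istoll c d T (nth a0 tl k) := arc_cost_ge0 T_ge0 _.
by lra.
Qed.

(* Induction along an s-t path of the network: the toll-free stretch [r] walked since
   the last toll arc tau_i is charged to U_(i,j) when the path re-enters P at tau_j. *)
Lemma plen_le_path_suffix q i r : (i <= m)%N ->
  is_path INIT TERM (termv i) t (r ++ q) -> all (predC istoll) r ->
  all (in_net istoll P) q ->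
  len T P <= prefix_len T (term_pos i) + len T r + len T q.
Proof.
elim: q i r => [|e q IH] i r hi.
  rewrite cats0 plen_nil addr0 => r_path r_tf _.
  have := @init_prefix_le i m.+1 r; rewrite /init_pos ltnn take_size initv_end.
  by apply; [rewrite ltnS hi leqnn | apply/andP].
move=> qr_path r_tf /andP[e_net q_net].
have [e_toll | e_tf] := boolP (istoll e); last first.
  have := IH i (rcons r e) hi; rewrite cat_rcons all_rcons /= e_tf r_tf.
  move=> /(_ qr_path isT q_net).
  by rewrite -cats1 !plen_cat !plen_cons plen_nil addr0 !addrA.
have e_tl : e \in tl by move: e_net; rewrite mem_filter /in_net e_toll.
set k := index e tl; have hk : (k < m)%N by rewrite index_mem.
have e_k : nth a0 tl k = e by rewrite nth_index.
have [r_path eq_path] := is_path_split qr_path.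
have [e_path q_path] := is_path_split (eq_path : is_path _ _ _ _ ([:: e] ++ q)).
have r_end : INIT e = last (termv i) (map TERM r) by case/andP: e_path => /andP[/eqP].
have := IH k.+1 [::] hk; rewrite (termv_toll _ _ a0) // e_k plen_nil addr0.
move=> /(_ q_path isT q_net) q_le; apply: (le_trans q_le).
rewrite plen_cons addrA lerD2r -e_k term_prefix_le_toll //.
by rewrite /tf_path r_tf andbT e_k r_end.
Qed.

End Sufficiency.

End Characterization.

Theorem theorem4 (R : realType) (V A : finType) (INIT TERM : A -> V)
  (istoll : pred A) (c d : A -> nat) (s t : V)
  (h_tf : exists Q, tf_path INIT TERM istoll s t Q)
  (P : seq A) (T : A -> R)
  (hP : valid R INIT TERM istoll c d s t P)
  (hT : forall e, istoll e -> 0 <= T e) :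
  consistent INIT TERM istoll c d s t T P <->
  (forall i j : nat, (i < j <= (size (tolls istoll P)).+1)%N ->
     (Lcal R INIT TERM istoll c d s t P i j + (Tcal istoll T P i j)%:E
        <= Ucal R INIT TERM istoll d s t P i j)%E).
Proof.
have a0 : A by case: P hP => [[]|e _ _].
have P_path : is_path INIT TERM s t P by case: hP => _ [].
split=> [P_cons i j hij | LT_le_U].
  rewrite (Lcal_add_Tcal a0 hP T hij).
  rewrite (plen_take_drop T P (term_pos_le_init_pos a0 P_path hij)).
  apply: le_ereal_inf_tmp => _ [q q_tf <-]; rewrite lee_fin addrC addKr.
  exact: segment_le_of_shortest hT P_cons hij q_tf.
split=> // [|Q Q_path Q_net]; first by apply/allP => e eP; rewrite /in_net eP orbT.
have := plen_le_path_suffix a0 hP hT LT_le_U (r := [::]) (leq0n _) Q_path isT Q_net.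
by rewrite /= take0 !plen_nil !add0r.
Qed.
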